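(* Let $p\in\mathbb R_3[u_1,u_2]$ be a non-zero polynomial of the form $p=\lambda_1 u_1^3 + \lambda_2(u_1^2u_2+u_2^3)+\lambda_3 u_1u_2^2$ with $\lambda_1,\lambda_2,\lambda_3\in\mathbb R$. Then the affine line \[ \left\{\tfrac13u_1^3-u_1u_2^2+sp\mid s\in\mathbb R\right\} \] contains at least one polynomial with a root of multiplicity greater than one, equivalently with vanishing discriminant.
   Context: $\mathbb R_3[u_1,u_2]$ is the space of real homogeneous cubic polynomials in $u_1,u_2$; roots are understood projectively (linear factors over $\mathbb C$), and the discriminant of $q=q_1u_1^3+q_2u_1^2u_2+q_3u_1u_2^2+q_4u_2^3$ is $\Delta(q)=q_2^2q_3^2-4q_1q_3^3-4q_2^3q_4+18q_1q_2q_3q_4-27q_1^2q_4^2$. *)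

From HB Require Import structures.
From mathcomp Require Import all_boot all_order all_algebra.
From mathcomp Require Import reals.
Set Implicit Arguments. Unset Strict Implicit. Unset Printing Implicit Defensive.
Import Order.TTheory GRing.Theory Num.Theory.
Local Open Scope ring_scope.

(* q = c1 u1^3 + c2 u1^2 u2 + c3 u1 u2^2 + c4 u2^3 *)
Record cubic (R : Type) := Cubic { c1 : R; c2 : R; c3 : R; c4 : R }.

Definition cubic0 {R : ringType} : cubic R := Cubic 0 0 0 0.

Definition cubic_add {R : ringType} (p q : cubic R) : cubic R :=
  Cubic (c1 p + c1 q) (c2 p + c2 q) (c3 p + c3 q) (c4 p + c4 q).

Definition cubic_scale {R : ringType} (s : R) (p : cubic R) : cubic R :=
  Cubic (s * c1 p) (s * c2 p) (s * c3 p) (s * c4 p).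

Definition disc {R : ringType} (q : cubic R) : R :=
  let: Cubic q1 q2 q3 q4 := q in
  q2^+2 * q3^+2 - 4 * q1 * q3^+3 - 4 * q2^+3 * q4
  + 18 * q1 * q2 * q3 * q4 - 27 * q1^+2 * q4^+2.

Definition pform {R : ringType} (l1 l2 l3 : R) : cubic R := Cubic l1 l2 l3 l2.

Definition q0 {R : fieldType} : cubic R := Cubic (3%:R^-1) 0 (-1) 0.

(* Let D(s) be the discriminant of q0 + s p; it is a polynomial in s with D(0) = 4/3 > 0, so by the
   intermediate value theorem it suffices to find s with D(s) <= 0.  If l1 <> l3, the value of s
   making the u1^3 and u1 u2^2 coefficients equal gives a cubic x u1^3 + y u1^2 u2 + x u1 u2^2 + y u2^3
   = (x u1 + y u2)(u1^2 + u2^2), whose discriminant -4 (x^2 + y^2)^2 is nonpositive.  If l1 = l3, the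
   even part D(s) + D(-s) = 2 (4/3 - 8 n s^2 - 4 n^2 s^4), with n = l1^2 + l2^2 > 0, is negative once
   n s^2 >= 1, so D(s) <= 0 or D(-s) <= 0. *)
From HB Require Import structures.
From mathcomp Require Import all_boot all_order all_algebra.
From mathcomp Require Import reals.
From mathcomp Require Import polyrcf ring lra.
Import Order.TTheory GRing.Theory Num.Theory.
Local Open Scope ring_scope.

Definition cubic_line {R : nzRingType} (q p : cubic R) (s : R) : cubic R :=
  cubic_add q (cubic_scale s p).

Definition disc_line_poly {R : comNzRingType} (q p : cubic R) : {poly R} :=
  disc (Cubic ((c1 q)%:P + 'X * (c1 p)%:P) ((c2 q)%:P + 'X * (c2 p)%:P)
              ((c3 q)%:P + 'X * (c3 p)%:P) ((c4 q)%:P + 'X * (c4 p)%:P)).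

Lemma horner_disc_line_poly (R : comNzRingType) (q p : cubic R) (s : R) :
  (disc_line_poly q p).[s] = disc (cubic_line q p s).
Proof. by rewrite /disc !hornerE /=; ring. Qed.

Lemma root_of_sign_change (R : rcfType) (P : {poly R}) (a b : R) :
  P.[a] * P.[b] <= 0 -> exists x, root P x.
Proof.
wlog le_ab : a b / a <= b => [hwlog|].
  by case: (leP a b) => [/hwlog|/ltW/hwlog]; last rewrite mulrC; apply.
by move=> /(polyrcf.poly_ivt le_ab) [x _ rootx]; exists x.
Qed.

Lemma cubic_line0 (R : nzRingType) (q p : cubic R) : cubic_line q p 0 = q.
Proof. by case: q => *; rewrite /cubic_line /cubic_add /= !(mul0r, addr0). Qed.

Lemma disc_line_root (R : rcfType) (q p : cubic R) :
  0 <= disc q -> (exists s, disc (cubic_line q p s) <= 0) ->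
  exists t, disc (cubic_line q p t) = 0.
Proof.
move=> q_ge0 [s line_le0].
have [t /rootP] : exists t, root (disc_line_poly q p) t.
  apply: (@root_of_sign_change _ _ 0 s).
  by rewrite !horner_disc_line_poly cubic_line0 mulr_ge0_le0.
by rewrite horner_disc_line_poly; exists t.
Qed.

Lemma disc_q0 (R : numFieldType) : disc (q0 : cubic R) = 4 / 3.
Proof. by rewrite /disc /=; ring. Qed.

Lemma disc_q0_gt0 (R : numFieldType) : 0 < disc (q0 : cubic R).
Proof. by rewrite disc_q0 divr_gt0 ?ltr0n. Qed.

Lemma disc_Cubic_xyxy (R : comNzRingType) (x y : R) :
  disc (Cubic x y x y) = - 4 * (x ^+ 2 + y ^+ 2) ^+ 2.
Proof. by rewrite /disc; ring. Qed.

Lemma disc_Cubic_xyxy_le0 (R : realDomainType) (x y : R) :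
  disc (Cubic x y x y) <= 0.
Proof. by rewrite disc_Cubic_xyxy mulNr oppr_le0 mulr_ge0 ?sqr_ge0. Qed.

Lemma pform_neq0 (R : nzRingType) (l1 l2 l3 : R) :
  pform l1 l2 l3 <> cubic0 -> [|| l1 != 0, l2 != 0 | l3 != 0].
Proof.
by apply: contra_notT; rewrite !negb_or !negbK => /and3P[/eqP-> /eqP-> /eqP->].
Qed.

Lemma disc_line_q0_pform_neq (R : realFieldType) (l1 l2 l3 : R) :
  l1 != l3 -> exists s, disc (cubic_line q0 (pform l1 l2 l3) s) <= 0.
Proof.
move=> l13; set s := - 4 / (3 * (l1 - l3)).
have same_c13 : 3^-1 + s * l1 = -1 + s * l3.
  by rewrite /s; field; rewrite subr_eq0 l13 ?pnatr_eq0.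
exists s; rewrite /cubic_line /cubic_add /= -same_c13.
exact: disc_Cubic_xyxy_le0.
Qed.

Lemma disc_line_q0_pform_even (R : numFieldType) (l1 l2 s : R) :
  let m := (l1 ^+ 2 + l2 ^+ 2) * s ^+ 2 in
  disc (cubic_line q0 (pform l1 l2 l1) s) + disc (cubic_line q0 (pform l1 l2 l1) (- s))
  = 2 * (4 / 3 - 8 * m - 4 * m ^+ 2).
Proof. by rewrite /disc /=; field. Qed.

Lemma disc_line_q0_pform_eq (R : realFieldType) (l1 l2 : R) :
  (l1 != 0) || (l2 != 0) -> exists s, disc (cubic_line q0 (pform l1 l2 l1) s) <= 0.
Proof.
move=> l12_neq0; set n := l1 ^+ 2 + l2 ^+ 2.
have n_gt0 : 0 < n.
  by rewrite lt_def paddr_eq0 ?sqr_ge0 // !sqrf_eq0 negb_and l12_neq0 addr_ge0 ?sqr_ge0.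
set s := 1 + n^-1.
have ns2_ge1 : 1 <= n * s ^+ 2.
  have ns : n * s = n + 1 by rewrite mulrDr mulr1 mulfV ?gt_eqF.
  have s_ge1 : 1 <= s by rewrite lerDl invr_ge0 ltW.
  by rewrite expr2 mulrA ns; nra.
have sum_lt0 : disc (cubic_line q0 (pform l1 l2 l1) s)
               + disc (cubic_line q0 (pform l1 l2 l1) (- s)) < 0.
  by rewrite disc_line_q0_pform_even -/n mulrA; nra.
have [disc_s_le0|disc_s_gt0] := lerP (disc (cubic_line q0 (pform l1 l2 l1) s)) 0.
  by exists s.
by exists (- s); lra.
Qed.

Theorem lemma4p10 (R : realType) (l1 l2 l3 : R) :
  pform l1 l2 l3 <> cubic0 ->
  exists s : R, disc (cubic_add q0 (cubic_scale s (pform l1 l2 l3))) = 0.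
Proof.
move=> /pform_neq0 p_neq0.
apply: disc_line_root; first exact/ltW/disc_q0_gt0.
case: (eqVneq l1 l3) p_neq0 => [<- | l13] p_neq0; last exact: disc_line_q0_pform_neq.
by apply: disc_line_q0_pform_eq; rewrite orbA in p_neq0; case/orP: p_neq0 => [|->].
Qed.
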